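(* Let $N\ge1$, $f:\mathbb{N}^N\to\mathbb{N}$, $p$ a prime, $n$ a nonnegative integer and $\mathbf{m}\in\mathbb{N}^N$. Define $g:\mathbb{N}^N\to\mathbb{N}$ by $g(\mathbf{x})=\binom{p}{p\mathbf{x}}_f$. Then $\binom{np}{p\mathbf{m}}_f\equiv\binom{n}{\mathbf{m}}_g\pmod{p^2}$.
   Context: $\mathbb{N}=\{0,1,2,\dots\}$. For a function $h:\mathbb{N}^N\to\mathbb{N}$, $k\ge0$ and $\mathbf{x}\in\mathbb{N}^N$, $\binom{k}{\mathbf{x}}_h=\sum_{\mathbf{m}_1+\cdots+\mathbf{m}_k=\mathbf{x}} h(\mathbf{m}_1)\cdots h(\mathbf{m}_k)$ over tuples of vectors in $\mathbb{N}^N$. *)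

From mathcomp Require Import all_boot.
Set Implicit Arguments. Unset Strict Implicit. Unset Printing Implicit Defensive.

Definition vec (N : nat) := {ffun 'I_N -> nat}.

Definition vscale (N : nat) (c : nat) (x : vec N) : vec N := [ffun j => c * x j].

(* Generalized multinomial coefficient
     binom k x _h = sum over (m_1,...,m_k) in (N^N)^k with m_1+...+m_k = x
                    of h(m_1)...h(m_k).
   Every summand tuple has all entries bounded by B := max_j x_j, so the sum
   ranges over k-tuples of vectors with entries in 'I_(B+1); this is the same
   (finite) index set, with no summand lost. *)
Definition gbinom (N : nat) (h : vec N -> nat) (k : nat) (x : vec N) : nat :=
  \sum_(ms : {ffun 'I_k -> {ffun 'I_N -> 'I_(\max_(j < N) x j).+1}}
        | [forall j : 'I_N, \sum_(i < k) (ms i j : nat) == x j])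
    \prod_(i < k) h [ffun j => (ms i j : nat)].

(* Splitting a tuple into its first a and last b entries gives the convolution
   binom(a+b, x) = sum_(y <= x) binom(a, y) binom(b, x - y).  The cyclic shift of
   p-tuples generates a p-group preserving the sum and the weight of a tuple, whose
   fixed points are the constant tuples; so p | binom(p, y) unless p | y, and then,
   by the convolution, p | binom(np, y) unless p | y.  In
   binom((n+1)p, px) = sum_y binom(p, y) binom(np, px - y) the terms where p does
   not divide y are therefore 0 mod p^2, and the terms y = pz are congruent to
   g(z) binom(n, x - z)_g by induction on n; these sum to binom(n+1, x)_g. *)

From mathcomp Require Import all_boot all_fingroup all_solvable.
Set Implicit Arguments. Unset Strict Implicit. Unset Printing Implicit Defensive.

Lemma sum_ord_ltn c n : \sum_(k < n) (k < c) = minn c n.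
Proof.
elim: n => [|n IHn]; first by rewrite big_ord0 minn0.
rewrite big_ord_recr /= IHn; case: ltnP => [lt_nc|le_cn].
  by rewrite !minnE !subKn // ?addn1 // ltnW.
by rewrite addn0 !(minn_idPl _) // ltnW.
Qed.

Lemma eq_sum_mod (I : finType) (P : pred I) (F G : I -> nat) d :
  (forall i, P i -> F i = G i %[mod d]) ->
  \sum_(i | P i) F i = \sum_(i | P i) G i %[mod d].
Proof. by move=> FG; rewrite -modn_summ (eq_bigr _ FG) modn_summ. Qed.

Lemma sum_card_levels (T : finType) (A : {set T}) (F : T -> nat) M :
  (forall x, F x <= M) ->
  \sum_(x in A) F x = \sum_(k < M.+1) #|[set x in A | k < F x]|.
Proof.
move=> leFM; transitivity (\sum_(x in A) \sum_(k < M.+1) (k < F x)).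
  apply: eq_bigr => x Ax; rewrite sum_ord_ltn; apply/esym/minn_idPl.
  exact: leqW (leFM x).
rewrite exchange_big; apply: eq_bigr => k _.
rewrite -sum1_card big_mkcond [RHS]big_mkcond; apply: eq_bigr => x _ /=.
by rewrite !inE; case: (x \in A); case: (k < F x).
Qed.

Section WeightedFixMod.

Variables (aT : finGroupType) (sT : finType) (D : {group aT}) (to : action D sT).

Lemma pgroup_fix_sum_mod (p : nat) (G : {group aT}) (S : {set sT}) (F : sT -> nat) :
  (p.-group G)%g -> [acts G, on S | to]%g -> {in G, forall a x, F (to x a) = F x} ->
  \sum_(x in S) F x = \sum_(x in 'Fix_(S | to)(G)%g) F x %[mod p].
Proof.
move=> pG actsS invF; have leFM x : F x <= \max_y F y by exact: leq_bigmax.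
(* Cut the weighted sum into the level sets of F, each stable under G. *)
rewrite !(sum_card_levels _ leFM); apply: eq_sum_mod => k _.
have actsSk : [acts G, on [set x in S | k < F x] | to]%g.
  apply/subsetP=> a Ga; have Da := subsetP (acts_dom actsS) a Ga.
  rewrite !inE Da; apply/subsetP => x; rewrite !inE => /andP[Sx ltkF].
  by rewrite invF // ltkF (acts_act actsS) ?Sx.
rewrite (pgroup_fix_mod pG actsSk); congr (_ %% p); apply: eq_card => x.
by rewrite !inE andbAC.
Qed.

End WeightedFixMod.

Lemma iter_ordS p k (i : 'I_p) : iter k (@ordS p) i = (i + k) %% p :> nat.
Proof.
elim: k => [|k IHk]; first by rewrite addn0 modn_small.
by rewrite iterS /= IHk -addn1 modnDml -addnA addn1 addnS.
Qed.

Section TupleRotation.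

Variables (X : finType) (p : nat).
Notation tup := {ffun 'I_p -> X}.

Definition tuple_rot (t : tup) : tup := [ffun i => t (ordS i)].

Lemma tuple_rot_inj : injective tuple_rot.
Proof.
move=> t1 t2 /ffunP eq_t; apply/ffunP => i.
by have := eq_t (ord_pred i); rewrite !ffunE ord_predK.
Qed.

Definition rot_perm : {perm tup} := perm tuple_rot_inj.

Lemma rot_permX k t : (rot_perm ^+ k)%g t = [ffun i => t (iter k (@ordS p) i)].
Proof.
elim: k t => [|k IHk] t; first by rewrite expg0 perm1; apply/ffunP => i; rewrite ffunE.
by rewrite expgSr permM IHk permE; apply/ffunP => i; rewrite !ffunE iterSr.
Qed.

Lemma rot_perm_pgroup : prime p -> (p.-group <[rot_perm]>)%g.
Proof.
move=> p_pr; rewrite pgroupE (pnat_dvd _ (pnat_id p_pr)) // order_dvdn.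
apply/eqP/permP => t; rewrite rot_permX perm1; apply/ffunP => i; rewrite ffunE.
by congr (t _); apply: ord_inj; rewrite iter_ordS modnDr modn_small.
Qed.

Lemma big_tuple_rot (R : Type) (idx : R) (op : Monoid.com_law idx) (G : X -> R) t :
  \big[op/idx]_i G (tuple_rot t i) = \big[op/idx]_i G (t i).
Proof.
rewrite [RHS](reindex_inj (can_inj (@ordSK p))); apply: eq_bigr => i _.
by rewrite ffunE.
Qed.

Lemma rot_perm_invariant (Y : Type) (F : tup -> Y) :
  (forall t, F (tuple_rot t) = F t) ->
  {in <[rot_perm]>%g, forall a t, F ('P%act t a) = F t}.
Proof.
move=> invF _ /cycleP[k ->] t /=; rewrite apermE.
elim: k => [|k IHk]; first by rewrite expg0 perm1.
by rewrite expgSr permM permE invF.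
Qed.

Lemma rot_perm_fix_const t i j : t \in 'Fix_('P)(<[rot_perm]>)%g -> t i = t j.
Proof.
move=> /afixP/(_ rot_perm (cycle_id _)) /=; rewrite apermE permE => /ffunP rot_t.
have rot_iter k : t (iter k (@ordS p) i) = t i.
  by elim: k => [|k IHk] //=; rewrite -IHk -[RHS]rot_t ffunE.
rewrite -(rot_iter (p - i + j)); congr (t _); apply: ord_inj.
by rewrite iter_ordS addnA subnKC 1?ltnW // modnDl modn_small.
Qed.

End TupleRotation.

Section FfunCat.

Variables (T : Type) (a b : nat).

Definition ffun_cat (l : {ffun 'I_a -> T}) (r : {ffun 'I_b -> T}) : {ffun 'I_(a + b) -> T} :=
  [ffun i => match split i with inl i => l i | inr i => r i end].

Lemma ffun_cat_lshift l r i : ffun_cat l r (lshift b i) = l i.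
Proof. by rewrite ffunE (unsplitK (inl _ i)). Qed.

Lemma ffun_cat_rshift l r i : ffun_cat l r (rshift a i) = r i.
Proof. by rewrite ffunE (unsplitK (inr _ i)). Qed.

End FfunCat.

Lemma sum_ffun_cat (T : finType) a b (F : {ffun 'I_(a + b) -> T} -> nat) :
  \sum_t F t = \sum_l \sum_r F (ffun_cat l r).
Proof.
rewrite pair_big (reindex (fun lr => ffun_cat lr.1 lr.2)) //=.
exists (fun t => ([ffun i => t (lshift b i)], [ffun i => t (rshift a i)])) => [[l r] _|t _].
  by congr pair; apply/ffunP => i; rewrite ffunE (ffun_cat_lshift, ffun_cat_rshift).
apply/ffunP => i /=.
by case: (split_ordP i) => j ->; rewrite (ffun_cat_lshift, ffun_cat_rshift) ffunE.
Qed.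

Section Vectors.

Variable N : nat.
Implicit Types (x y u v : vec N) (h : vec N -> nat).

Definition vleq x y := [forall j, x j <= y j].
Definition vadd x y : vec N := [ffun j => x j + y j].
Definition vsub x y : vec N := [ffun j => x j - y j].
Definition vdvdn d x := [forall j, d %| x j].

Notation box K := {ffun 'I_N -> 'I_K.+1}.

Definition bval K (y : box K) : vec N := [ffun j => (y j : nat)].

Definition tsum K k (t : {ffun 'I_k -> box K}) : vec N := [ffun j => \sum_(i < k) (t i j : nat)].

Definition tweight K h k (t : {ffun 'I_k -> box K}) := \prod_(i < k) h (bval (t i)).

(* [gbinom h k x] sums over tuples of vectors in a box sized by x itself;
   [box_gbinom K] fixes one box for all the vectors in a computation. *)
Definition box_gbinom K h k x := \sum_(t : {ffun 'I_k -> box K} | tsum t == x) tweight h t.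

Lemma leq_vmax x j : x j <= \max_(i < N) x i.
Proof. exact: leq_bigmax. Qed.

Lemma vdvdn_subl d x y : vleq y x -> vdvdn d y -> vdvdn d (vsub x y) = vdvdn d x.
Proof.
move=> /forallP le_yx /forallP dvd_y; apply: eq_forallb => j.
by rewrite ffunE dvdn_subl.
Qed.

Lemma vdvdn_subr d x y : vleq y x -> vdvdn d x -> vdvdn d (vsub x y) = vdvdn d y.
Proof.
move=> /forallP le_yx /forallP dvd_x; apply: eq_forallb => j.
by rewrite ffunE dvdn_subr.
Qed.

Lemma vdvdn_scale d x : vdvdn d (vscale d x).
Proof. by apply/forallP => j; rewrite ffunE dvdn_mulr. Qed.

Lemma vsub_scale d x y : vsub (vscale d x) (vscale d y) = vscale d (vsub x y).
Proof. by apply/ffunP => j; rewrite !ffunE mulnBr. Qed.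

Lemma bval_inj K : injective (@bval K).
Proof.
move=> y1 y2 /ffunP eq_y; apply/ffunP => j; apply: ord_inj.
by have := eq_y j; rewrite !ffunE.
Qed.

Lemma bval_le K (y : box K) j : bval y j <= K.
Proof. by rewrite ffunE -ltnS. Qed.

Lemma vsub_le K x y : (forall j, x j <= K) -> forall j, vsub x y j <= K.
Proof. by move=> lexK j; rewrite ffunE (leq_trans (leq_subr _ _)). Qed.

Lemma gbinom_boxE h k x : gbinom h k x = box_gbinom (\max_(j < N) x j) h k x.
Proof.
apply: eq_bigl => t; apply/forallP/eqP => [sum_t|/ffunP eq_t j].
  by apply/ffunP => j; rewrite ffunE; apply/eqP.
by rewrite -eq_t ffunE.
Qed.

Lemma tsum_ge K k (t : {ffun 'I_k -> box K}) i j : t i j <= tsum t j.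
Proof. by rewrite ffunE (bigD1 i) //= leq_addr. Qed.

Lemma box_gbinom_widen K K' h k x : K <= K' -> (forall j, x j <= K) ->
  box_gbinom K' h k x = box_gbinom K h k x.
Proof.
move=> leKK' lexK; have leKK'1 : K.+1 <= K'.+1 by [].
pose widen (t : {ffun 'I_k -> box K}) : {ffun 'I_k -> box K'} :=
  [ffun i => [ffun j => widen_ord leKK'1 (t i j)]].
pose narrow (t : {ffun 'I_k -> box K'}) : {ffun 'I_k -> box K} :=
  [ffun i => [ffun j => inord (t i j)]].
have tsum_widen t : tsum (widen t) = tsum t.
  by apply/ffunP => j; rewrite !ffunE; apply: eq_bigr => i _; rewrite !ffunE.
rewrite /box_gbinom (reindex_onto widen narrow) => [|t /eqP tsum_t]; last first.
  apply/ffunP => i; apply/ffunP => j; apply: ord_inj; rewrite !ffunE /= inordK //.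
  by rewrite ltnS (leq_trans (tsum_ge t i j)) // tsum_t.
apply: eq_big => [t|t _].
  rewrite tsum_widen andb_idr // => _; apply/eqP/ffunP => i; apply/ffunP => j.
  by apply: ord_inj; rewrite !ffunE /= inordK.
by apply: eq_bigr => i _; congr h; apply/ffunP => j; rewrite !ffunE.
Qed.

Lemma gbinom_box K h k x : (forall j, x j <= K) -> gbinom h k x = box_gbinom K h k x.
Proof.
move=> lexK; rewrite gbinom_boxE [RHS](@box_gbinom_widen (\max_(j < N) x j) K) //.
  exact/bigmax_leqP.
exact: leq_vmax.
Qed.

Lemma gbinom0 h x : gbinom h 0 x = [forall j, x j == 0].
Proof.
rewrite gbinom_boxE /box_gbinom big_mkcond /=.
under eq_bigr => t _.
  have -> : (tsum t == x) = [forall j, x j == 0].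
    apply/eqP/forallP => [/ffunP eq_t j|x0]; first by rewrite -eq_t ffunE big_ord0.
    by apply/ffunP => j; rewrite ffunE big_ord0 (eqP (x0 j)).
  rewrite /tweight big_ord0; over.
by rewrite sum_nat_const card_ffun card_ord expn0 mul1n; case: forallP.
Qed.

Lemma box_gbinom1 K h x : (forall j, x j <= K) -> box_gbinom K h 1 x = h x.
Proof.
move=> lexK; pose t0 : {ffun 'I_1 -> box K} := [ffun _ => [ffun j => inord (x j)]].
have bval_t0 : bval (t0 ord0) = x by apply/ffunP => j; rewrite !ffunE inordK ?ltnS.
rewrite /box_gbinom (big_pred1 t0) => [|t]; first by rewrite /tweight big_ord1 bval_t0.
apply/eqP/eqP => [/ffunP tsum_t|->].
  apply/ffunP => i; apply/ffunP => j; apply: ord_inj.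
  by rewrite (ord1 i) !ffunE -tsum_t ffunE big_ord1 inordK.
by apply/ffunP => j; rewrite !ffunE big_ord1 !ffunE inordK ?ltnS.
Qed.

Lemma gbinom1 h x : gbinom h 1 x = h x.
Proof. by rewrite (gbinom_box _ _ (leq_vmax x)) box_gbinom1 //; exact: leq_vmax. Qed.

Lemma tsum_cat K a b (l : {ffun 'I_a -> box K}) (r : {ffun 'I_b -> box K}) :
  tsum (ffun_cat l r) = vadd (tsum l) (tsum r).
Proof.
apply/ffunP => j; rewrite !ffunE big_split_ord.
by congr (_ + _); apply: eq_bigr => i _; rewrite (ffun_cat_lshift, ffun_cat_rshift).
Qed.

Lemma tweight_cat K h a b (l : {ffun 'I_a -> box K}) (r : {ffun 'I_b -> box K}) :
  tweight h (ffun_cat l r) = tweight h l * tweight h r.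
Proof.
rewrite /tweight big_split_ord.
by congr (_ * _); apply: eq_bigr => i _; rewrite (ffun_cat_lshift, ffun_cat_rshift).
Qed.

Lemma sum_box_vsub_if K u v x (c : nat) : (forall j, x j <= K) ->
  \sum_(y : box K | vleq (bval y) x) (if (u == bval y) && (v == vsub x (bval y)) then c else 0)
    = if vadd u v == x then c else 0.
Proof.
move=> lexK; have [uv_x|uv_x] := eqP; last first.
  apply: big1 => y /forallP le_yx; case: ifP => // /andP[/eqP u_y /eqP v_xy].
  case: uv_x; apply/ffunP => j; have := le_yx j.
  by rewrite !ffunE u_y v_xy !ffunE => /subnKC.
have le_ux j : u j <= x j by rewrite -uv_x ffunE leq_addr.
pose y0 : box K := [ffun j => inord (u j)].
have bval_y0 : bval y0 = u.
  by apply/ffunP => j; rewrite !ffunE inordK // ltnS (leq_trans (le_ux j)).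
rewrite (bigD1 y0) /=; last by rewrite bval_y0; apply/forallP.
rewrite bval_y0 eqxx /= ifT; last first.
  by apply/eqP/ffunP => j; rewrite -uv_x !ffunE addKn.
rewrite big1 ?addn0 // => y /andP[_ ne_y]; case: ifP => // /andP[/eqP u_y _].
by rewrite (bval_inj (etrans bval_y0 u_y)) eqxx in ne_y.
Qed.

Lemma gbinomD K h a b x : (forall j, x j <= K) ->
  gbinom h (a + b) x
    = \sum_(y : box K | vleq (bval y) x) gbinom h a (bval y) * gbinom h b (vsub x (bval y)).
Proof.
move=> lexK; rewrite (gbinom_box _ _ lexK) /box_gbinom big_mkcond sum_ffun_cat.
under eq_bigr => l _ do under eq_bigr => r _ do
  rewrite tsum_cat tweight_cat -(sum_box_vsub_if _ _ _ lexK).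
under eq_bigr do rewrite exchange_big.
rewrite exchange_big; apply: eq_bigr => y _.
rewrite !(gbinom_box _ _ (bval_le y), gbinom_box _ _ (vsub_le (bval y) lexK)).
rewrite /box_gbinom big_distrl [RHS]big_mkcond; apply: eq_bigr => l _ /=.
case: eqP => _; last by rewrite big1.
by rewrite big_distrr [RHS]big_mkcond; apply: eq_bigr => r _; case: eqP.
Qed.

Lemma tsum_rot K p (t : {ffun 'I_p -> box K}) : tsum (tuple_rot t) = tsum t.
Proof. by apply/ffunP => j; rewrite !ffunE (big_tuple_rot _ (fun y : box K => (y j : nat))). Qed.

Lemma tweight_rot K h p (t : {ffun 'I_p -> box K}) : tweight h (tuple_rot t) = tweight h t.
Proof. exact: (big_tuple_rot _ (fun y : box K => h (bval y))). Qed.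

Lemma dvdn_gbinom_prime h p x : prime p -> ~~ vdvdn p x -> p %| gbinom h p x.
Proof.
move=> p_pr ndvd_x; rewrite (gbinom_box _ _ (leq_vmax x)) /box_gbinom.
set K := \max_(j < N) x j; set S := [set t : {ffun 'I_p -> box K} | tsum t == x].
have actsS : [acts <[rot_perm (box K) p]>, on S | 'P]%g.
  apply/actsP => a rot_a t; rewrite !inE.
  by rewrite (rot_perm_invariant (@tsum_rot K p)).
have no_fix : 'Fix_(S | 'P)(<[rot_perm (box K) p]>)%g = set0.
  apply/setP => t; rewrite in_setI in_set0 inE; apply/andP => -[/eqP tsum_t fix_t].
  have i0 : 'I_p := Ordinal (prime_gt0 p_pr).
  case/negP: ndvd_x; apply/forallP => j; rewrite -tsum_t ffunE.
  rewrite (eq_bigr (fun=> (t i0 j : nat))) => [|i _].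
    by rewrite sum_nat_const card_ord dvdn_mulr.
  by rewrite (rot_perm_fix_const i i0 fix_t).
rewrite (eq_bigl (fun t => t \in S)) => [|t]; last by rewrite inE.
rewrite /dvdn (pgroup_fix_sum_mod (rot_perm_pgroup _ p_pr) actsS).
  by rewrite no_fix big_set0 mod0n.
exact: rot_perm_invariant (@tweight_rot K h p).
Qed.

Lemma dvdn_gbinom_mulp h p n x : prime p -> ~~ vdvdn p x -> p %| gbinom h (n * p) x.
Proof.
move=> p_pr; elim: n x => [|n IHn] x ndvd_x.
  rewrite mul0n gbinom0; case: forallP => // x0; case/negP: ndvd_x.
  by apply/forallP => j; rewrite (eqP (x0 j)) dvdn0.
rewrite mulSn (gbinomD _ _ _ (leq_vmax x)); apply: dvdn_sum => y le_yx.
have [dvd_y|ndvd_y] := boolP (vdvdn p (bval y)).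
  by rewrite dvdn_mull // IHn // vdvdn_subl.
by rewrite dvdn_mulr // dvdn_gbinom_prime.
Qed.

Lemma sum_box_scale K d x (F : vec N -> nat) : 0 < d -> (forall j, vscale d x j <= K) ->
  \sum_(y : box K | vleq (bval y) (vscale d x) && vdvdn d (bval y)) F (bval y)
    = \sum_(z : box K | vleq (bval z) x) F (vscale d (bval z)).
Proof.
move=> d_gt0 le_dxK.
pose mul (z : box K) : box K := [ffun j => inord (d * z j)].
pose div (y : box K) : box K := [ffun j => inord (y j %/ d)].
have bval_div (y : box K) j : bval (div y) j = bval y j %/ d.
  by rewrite !ffunE inordK // ltnS (leq_trans (leq_div _ _)) // -ltnS.
have bval_mul (z : box K) :
    (forall j, vscale d (bval z) j <= K) -> bval (mul z) = vscale d (bval z).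
  by move=> le_dzK; apply/ffunP => j; have := le_dzK j; rewrite !ffunE => le_j; rewrite inordK.
have bval_mul_div (y : box K) : bval (mul (div y)) = vscale d (bval (div y)).
  apply: bval_mul => j; rewrite ffunE bval_div mulnC (leq_trans (leq_divM _ _)) //.
  exact: bval_le.
have mul_divE (y : box K) : (mul (div y) == y) = vdvdn d (bval y).
  rewrite -(inj_eq (@bval_inj K)) bval_mul_div; apply/eqP/forallP => [<-|dvd_y].
    by apply/forallP; exact: vdvdn_scale.
  by apply/ffunP => j; rewrite ffunE bval_div mulnC divnK.
rewrite [RHS](reindex_onto div mul) => [|z /forallP le_zx]; last first.
  apply: bval_inj; apply/ffunP => j; rewrite bval_div bval_mul ?ffunE ?mulKn // => i.
  by rewrite (leq_trans _ (le_dxK i)) // ![vscale _ _ _]ffunE leq_pmul2l.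
have bval_divK (y : box K) : vdvdn d (bval y) -> bval y = vscale d (bval (div y)).
  by rewrite -mul_divE -bval_mul_div => /eqP ->.
apply: eq_big => [y|y /andP[_ /bval_divK <-] //].
rewrite mul_divE; case dvd_y: (vdvdn d (bval y)); rewrite ?andbF ?andbT //.
rewrite [in LHS](bval_divK y dvd_y); apply: eq_forallb => j.
by rewrite !ffunE leq_pmul2l.
Qed.

End Vectors.

Theorem theorem7 (N : nat) (f : vec N -> nat) (p n : nat) (m : vec N) :
  1 <= N -> prime p ->
  gbinom f (n * p) (vscale p m)
    = gbinom (fun x : vec N => gbinom f p (vscale p x)) n m %[mod p ^ 2].
Proof.
move=> _ p_pr; have p_gt0 := prime_gt0 p_pr.
set g := fun x => gbinom f p (vscale p x).
elim: n m => [|n IHn] m.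
  rewrite mul0n !gbinom0; congr (nat_of_bool _ %% _); apply: eq_forallb => j.
  by rewrite ffunE muln_eq0 (gtn_eqF p_gt0).
set K := \max_(j < N) vscale p m j; have le_pmK : forall j, vscale p m j <= K := leq_vmax _.
have le_mK j : m j <= K by rewrite (leq_trans _ (le_pmK j)) // ffunE leq_pmull.
rewrite mulSn (gbinomD _ _ _ le_pmK) (bigID (fun y => vdvdn p (bval y))) /=.
set nondiv := (\sum_(y | _ && ~~ vdvdn p (bval y)) _).
rewrite -modnDmr; have -> : nondiv %% p ^ 2 = 0.
  apply/eqP; apply: dvdn_sum => y /andP[le_y ndvd_y]; rewrite -mulnn dvdn_mul //.
    exact: dvdn_gbinom_prime.
  by apply: dvdn_gbinom_mulp; rewrite // vdvdn_subr ?vdvdn_scale.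
pose F y := gbinom f p y * gbinom f (n * p) (vsub (vscale p m) y).
rewrite addn0 (sum_box_scale F) // -[n.+1]add1n (gbinomD _ _ _ le_mK).
apply: eq_sum_mod => z _.
by rewrite gbinom1 /F vsub_scale -modnMmr IHn modnMmr.
Qed.
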